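(* Let $\eta>0$, let $\mathcal{I},\mathcal{J},\mathcal{K}$ be finite index sets with cluster trees $\mathcal{T}_{\mathcal{I}},\mathcal{T}_{\mathcal{J}},\mathcal{T}_{\mathcal{K}}$, where every cluster $c$ is associated with a nonempty bounded set $\Omega_c\subseteq\mathbb{R}^d$, and let $\mathcal{T}_{\mathcal{I}\times\mathcal{J}}$ and $\mathcal{T}_{\mathcal{J}\times\mathcal{K}}$ be block trees constructed by the admissibility-based procedure described in the context (so that every non-leaf block is not admissible). Let $t\in\mathcal{T}_{\mathcal{I}}$ and $r\in\mathcal{T}_{\mathcal{K}}$, and let $\mathcal{P}_{tr}$ be the set of subdivided products of the accumulator for $(t,r)$, as defined in the context. If $\mathcal{P}_{tr}$ is not empty, then there is a cluster $s\in\mathcal{T}_{\mathcal{J}}$ with $(t,s)\in\mathcal{T}_{\mathcal{I}\times\mathcal{J}}\setminus\mathcal{L}_{\mathcal{I}\times\mathcal{J}}$ and $(s,r)\in\mathcal{T}_{\mathcal{J}\times\mathcal{K}}\setminus\mathcal{L}_{\mathcal{J}\times\mathcal{K}}$ such that \[ \frac{\eta}{\eta+1}\operatorname{dist}(\Omega_t,\Omega_r) < \max\{\operatorname{diam}(\Omega_t),\operatorname{diam}(\Omega_s),\operatorname{diam}(\Omega_r)\}. \]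
   Context: A cluster tree $\mathcal{T}_{\mathcal{I}}$ for a finite index set $\mathcal{I}$ is a finite tree whose nodes (clusters) $t$ are labeled by subsets $\hat t\subseteq\mathcal{I}$, the root labeled $\mathcal{I}$, such that the labels of the children of a non-leaf node form a disjoint partition of its label. Each cluster $t$ has an associated nonempty bounded set $\Omega_t\subseteq\mathbb{R}^d$ (with $\Omega_{t'}\subseteq\Omega_t$ for children $t'$). A pair of clusters $(t,s)$ is called admissible if $\max\{\operatorname{diam}(\Omega_t),\operatorname{diam}(\Omega_s)\}\le 2\eta\operatorname{dist}(\Omega_t,\Omega_s)$. The block tree $\mathcal{T}_{\mathcal{I}\times\mathcal{J}}$ for cluster trees $\mathcal{T}_{\mathcal{I}},\mathcal{T}_{\mathcal{J}}$ is built recursively starting from the pair of roots: a block $(t,s)$ is kept as a leaf if it is admissible; otherwise, if $t$ or $s$ has children, its children are $\{t\}\times\operatorname{chil}(s)$ if $t$ is a leaf, $\operatorname{chil}(t)\times\{s\}$ if $s$ is a leaf, and $\operatorname{chil}(t)\times\operatorname{chil}(s)$ otherwise, and these are treated recursively; if neither has children, $(t,s)$ is an inadmissible leaf. $\mathcal{L}_{\mathcal{I}\times\mathcal{J}}$ denotes the set of leaves, split into admissible leaves $\mathcal{L}^+_{\mathcal{I}\times\mathcal{J}}$ and inadmissible leaves $\mathcal{L}^-_{\mathcal{I}\times\mathcal{J}}$; analogously for $\mathcal{T}_{\mathcal{J}\times\mathcal{K}}$. Given matrices $X\in\mathbb{R}^{\mathcal{I}\times\mathcal{J}}$, $Y\in\mathbb{R}^{\mathcal{J}\times\mathcal{K}}$,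 an accumulator for $(t,r)$ collects products $X|_{\hat t\times\hat s}Y|_{\hat s\times\hat r}$ with $(t,s)\in\mathcal{T}_{\mathcal{I}\times\mathcal{J}}$, $(s,r)\in\mathcal{T}_{\mathcal{J}\times\mathcal{K}}$; such a product is stored as a triple $(s,X|_{\hat t\times\hat s},Y|_{\hat s\times\hat r})$ in the set $\mathcal{P}_{tr}$ (''subdivided products'') only if neither $(t,s)\in\mathcal{L}_{\mathcal{I}\times\mathcal{J}}$ nor $(s,r)\in\mathcal{L}_{\mathcal{J}\times\mathcal{K}}$ (products with an admissible or inadmissible leaf block are stored in other components of the accumulator). Starting from the accumulator of the root pair containing the full product, accumulators for children $(t',r')$ are obtained by splitting, where each triple $(s,\cdot,\cdot)\in\mathcal{P}_{tr}$ contributes the sub-products for $s'\in\operatorname{chil}(s)$ with the same storage rule. *)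

From HB Require Import structures.
From mathcomp Require Import all_boot all_order all_algebra.
From mathcomp Require Import boolp classical_sets reals.

Set Implicit Arguments.
Unset Strict Implicit.
Unset Printing Implicit Defensive.

Import Order.TTheory GRing.Theory Num.Theory.
Local Open Scope ring_scope.


Section ClusterTrees.
Variables (R : realType) (d : nat).

Definition edist (x y : 'rV[R]_d) : R :=
  Num.sqrt (\sum_(i < d) (x ord0 i - y ord0 i) ^+ 2).

Definition diam (A : set 'rV[R]_d) : R :=
  sup [set e | exists x y, A x /\ A y /\ e = edist x y].
Definition dist (A B : set 'rV[R]_d) : R :=
  inf [set e | exists x y, A x /\ B y /\ e = edist x y].

Definition bounded_set (A : set 'rV[R]_d) : Prop :=
  exists M : R, forall x, A x -> edist x 0 <= M.

(* Data of a cluster tree over the finite index set I: a finite type of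
   nodes (clusters), a root, children lists, index labels \hat t and
   associated sets Omega_t. *)
Record cluster_tree (I : finType) := ClusterTree {
  ct_node :> finType;
  ct_root : ct_node;
  ct_chil : ct_node -> seq ct_node;
  ct_lab  : ct_node -> {set I};
  ct_dom  : ct_node -> set 'rV[R]_d }.

Definition is_cluster_tree (I : finType) (T : cluster_tree I) : Prop :=
  (forall t : T, uniq (ct_chil t)) /\
      (forall t t' s : T, s \in ct_chil t -> s \in ct_chil t' -> t = t') /\
      (forall t : T, ct_root T \notin ct_chil t) /\
      (forall t : T, connect (fun a b : T => b \in ct_chil a) (ct_root T) t) /\
      ct_lab (ct_root T) = finset.setTfor I /\
      (forall t : T, ct_chil t != [::] ->
         ct_lab t = \bigcup_(s <- ct_chil t) ct_lab s /\
         (forall s1 s2, s1 \in ct_chil t -> s2 \in ct_chil t -> s1 != s2 ->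
            [disjoint ct_lab s1 & ct_lab s2])) /\
      (forall t s : T, s \in ct_chil t -> (ct_dom s `<=` ct_dom t)%classic) /\
      (forall t : T, (exists x, ct_dom t x) /\ bounded_set (ct_dom t)).

Variables (I J : finType) (T1 : cluster_tree I) (T2 : cluster_tree J).

Definition admissible (eta : R) (t : T1) (s : T2) : Prop :=
  Num.max (diam (ct_dom t)) (diam (ct_dom s))
    <= 2 * eta * dist (ct_dom t) (ct_dom s).

Definition pair_chil (t : T1) (s : T2) : seq (T1 * T2) :=
  if ct_chil t == [::] then [seq (t, s') | s' <- ct_chil s]
  else if ct_chil s == [::] then [seq (t', s) | t' <- ct_chil t]
  else [seq (t', s') | t' <- ct_chil t, s' <- ct_chil s].

Inductive in_btree (eta : R) : T1 -> T2 -> Prop :=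
| bt_root : in_btree eta (ct_root T1) (ct_root T2)
| bt_child t s t' s' : in_btree eta t s -> ~ admissible eta t s ->
    (t', s') \in pair_chil t s -> in_btree eta t' s'.

Definition bleaf (eta : R) (t : T1) (s : T2) : Prop :=
  admissible eta t s \/ (ct_chil t = [::] /\ ct_chil s = [::]).

Definition inner_block (eta : R) (t : T1) (s : T2) : Prop :=
  in_btree eta t s /\ ~ bleaf eta t s.

End ClusterTrees.

Definition sons (R : realType) (d : nat) (I : finType)
  (T : cluster_tree R d I) (s : T) : seq T :=
  if ct_chil s == [::] then [:: s] else ct_chil s.

(* Subdivided products P_{tr}: s is such that the triple
   (s, X|_{t x s}, Y|_{s x r}) belongs to P_{tr}.  The matrix components
   are determined by (t,s,r) and therefore omitted. *)
Section Accumulator.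
Variables (R : realType) (d : nat) (I J K : finType)
  (TI : cluster_tree R d I) (TJ : cluster_tree R d J)
  (TK : cluster_tree R d K) (eta : R).

Inductive subdivided : TI -> TK -> TJ -> Prop :=
| sp_root :
    inner_block eta (ct_root TI) (ct_root TJ) ->
    inner_block eta (ct_root TJ) (ct_root TK) ->
    subdivided (ct_root TI) (ct_root TK) (ct_root TJ)
| sp_split t r s t' r' s' :
    subdivided t r s ->
    (t', r') \in pair_chil t r ->
    s' \in sons s ->
    inner_block eta t' s' ->
    inner_block eta s' r' ->
    subdivided t' r' s'.

End Accumulator.

(* Non-admissibility of (t,s) and (s,r) gives 2 eta dist(t,s) and
   2 eta dist(s,r) below the largest of the three diameters M, and the
   triangle inequality through Omega_s gives
   dist(t,r) <= dist(t,s) + diam(s) + dist(s,r); hence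
   eta dist(t,r) < M/2 + eta M + M/2 = (eta + 1) M. *)
From HB Require Import structures.
From mathcomp Require Import all_boot all_order all_algebra.
From mathcomp Require Import boolp classical_sets reals.
From mathcomp Require Import ring lra.
Import Order.TTheory GRing.Theory Num.Theory.
Set Implicit Arguments.
Unset Strict Implicit.
Local Open Scope ring_scope.

Lemma cauchy_schwarz (R : realFieldType) (I : finType) (a b : I -> R) :
  (\sum_i a i * b i) ^+ 2 <= (\sum_i a i ^+ 2) * (\sum_i b i ^+ 2).
Proof.
have lagrange : \sum_i \sum_j (a i * b j - a j * b i) ^+ 2 =
    2 * ((\sum_i a i ^+ 2) * (\sum_i b i ^+ 2) - (\sum_i a i * b i) ^+ 2).
  have expand i j : (a i * b j - a j * b i) ^+ 2 =
      a i ^+ 2 * b j ^+ 2 + b i ^+ 2 * a j ^+ 2 - 2 * ((a i * b i) * (a j * b j)).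
    by ring.
  under eq_bigr do under eq_bigr do rewrite expand.
  under eq_bigr do rewrite sumrB big_split /= -!mulr_sumr.
  rewrite sumrB big_split /= -!mulr_suml -mulr_sumr -mulr_suml.
  by ring.
have : 0 <= \sum_i \sum_j (a i * b j - a j * b i) ^+ 2.
  by apply: sumr_ge0 => i _; apply: sumr_ge0 => j _; exact: sqr_ge0.
by rewrite lagrange; lra.
Qed.

Lemma minkowski (R : rcfType) (I : finType) (a b : I -> R) :
  Num.sqrt (\sum_i (a i + b i) ^+ 2) <=
  Num.sqrt (\sum_i a i ^+ 2) + Num.sqrt (\sum_i b i ^+ 2).
Proof.
set A := \sum_i a i ^+ 2; set B := \sum_i b i ^+ 2; set S := \sum_i a i * b i.
have A_ge0 : 0 <= A by apply: sumr_ge0 => i _; exact: sqr_ge0.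
have B_ge0 : 0 <= B by apply: sumr_ge0 => i _; exact: sqr_ge0.
have S_le : S <= Num.sqrt A * Num.sqrt B.
  rewrite -sqrtrM // (le_trans (ler_norm S)) // -sqrtr_sqr ler_sqrt.
    exact: cauchy_schwarz.
  by rewrite mulr_ge0.
have -> : \sum_i (a i + b i) ^+ 2 = A + B + 2 * S.
  under eq_bigr => i _ do rewrite sqrrD -mulr_natl.
  by rewrite !big_split /= -mulr_sumr addrAC.
rewrite -[leRHS]ger0_norm ?addr_ge0 ?sqrtr_ge0 //.
rewrite -sqrtr_sqr ler_sqrt ?sqr_ge0 //.
by rewrite sqrrD !sqr_sqrtr //; lra.
Qed.

Section EuclideanDistance.
Variables (R : realType) (d : nat).
Implicit Types (x y z : 'rV[R]_d) (A B C : set 'rV[R]_d).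

Lemma edist_ge0 x y : 0 <= edist x y.
Proof. exact: sqrtr_ge0. Qed.

Lemma edistC x y : edist x y = edist y x.
Proof. by rewrite /edist; congr Num.sqrt; apply: eq_bigr => i _; ring. Qed.

Lemma edist_triangle x y z : edist x z <= edist x y + edist y z.
Proof.
have := minkowski (fun i => x ord0 i - y ord0 i) (fun i => y ord0 i - z ord0 i).
by rewrite /edist; under eq_bigr => i _ do rewrite addrA subrK.
Qed.

Lemma edist_le_diam A x y : bounded_set A -> A x -> A y -> edist x y <= diam A.
Proof.
move=> [M boundM] Ax Ay; apply: ub_le_sup; last by exists x, y.
exists (M + M) => _ [u [v [Au [Av ->]]]].
by rewrite (le_trans (edist_triangle u 0 v)) // (edistC 0) lerD ?boundM.
Qed.

Lemma dist_le_edist A B x y : A x -> B y -> dist A B <= edist x y.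
Proof.
move=> Ax By; apply: ge_inf; last by exists x, y.
by exists 0 => _ [u [v [_ [_ ->]]]]; exact: edist_ge0.
Qed.

Lemma dist_approx A B e : (exists x, A x) -> (exists y, B y) -> 0 < e ->
  exists x y, [/\ A x, B y & edist x y < dist A B + e].
Proof.
move=> [x Ax] [y By] e_gt0.
have has_inf_dists : has_inf [set e | exists x y, A x /\ B y /\ e = edist x y].
  split; first by exists (edist x y), x, y.
  by exists 0 => _ [u [v [_ [_ ->]]]]; exact: edist_ge0.
have [_ [u [v [Au [Bv ->]]]] close] := inf_adherent e_gt0 has_inf_dists.
by exists u, v.
Qed.

Lemma dist_triangle_diam A B C : (exists x, A x) -> (exists y, B y) ->
  (exists z, C z) -> bounded_set B ->
  dist A C <= dist A B + diam B + dist B C.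
Proof.
move=> neA neB neC bB; apply/ler_addgt0Pr => e e_gt0.
have e2_gt0 : 0 < e / 2 by rewrite divr_gt0.
have [x [y [Ax By xy_lt]]] := dist_approx neA neB e2_gt0.
have [y' [z [By' Cz yz_lt]]] := dist_approx neB neC e2_gt0.
have := dist_le_edist Ax Cz; have := edist_triangle x y z.
have := edist_triangle y y' z; have := edist_le_diam bB By By'.
lra.
Qed.

End EuclideanDistance.

Lemma scaled_dist_lt_max (R : realFieldType) (eta a b c Dt Ds Dr : R) :
  0 < eta -> 2 * eta * a < Num.max Dt Ds -> 2 * eta * b < Num.max Ds Dr ->
  c <= a + Ds + b -> eta / (eta + 1) * c < Num.max Dt (Num.max Ds Dr).
Proof.
move=> eta_gt0 a_lt b_lt c_le; set M := Num.max Dt _.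
have tsM : Num.max Dt Ds <= M by rewrite !(ge_max, le_max, lexx, orTb, orbT).
have srM : Num.max Ds Dr <= M by rewrite !(ge_max, le_max, lexx, orTb, orbT).
have sM : Ds <= M by rewrite !(le_max, lexx, orTb, orbT).
have : eta * c < M * (eta + 1) by nra.
by rewrite mulrAC ltr_pdivrMr ?addr_gt0.
Qed.

Section ClusterTree.
Variables (R : realType) (d : nat) (I : finType) (T : cluster_tree R d I).
Hypothesis T_ok : is_cluster_tree T.

Lemma cluster_dom_nonempty (t : T) : exists x, ct_dom t x.
Proof. by case: T_ok => _ [_ [_ [_ [_ [_ [_ /(_ t) []]]]]]]. Qed.

Lemma cluster_dom_bounded (t : T) : bounded_set (ct_dom t).
Proof. by case: T_ok => _ [_ [_ [_ [_ [_ [_ /(_ t) []]]]]]]. Qed.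

End ClusterTree.

Lemma inner_block_dist_lt (R : realType) (d : nat) (I J : finType)
    (T1 : cluster_tree R d I) (T2 : cluster_tree R d J)
    (eta : R) (t : T1) (s : T2) :
  inner_block eta t s ->
  2 * eta * dist (ct_dom t) (ct_dom s)
    < Num.max (diam (ct_dom t)) (diam (ct_dom s)).
Proof.
by move=> [_ not_leaf]; rewrite ltNge; apply/negP => adm; apply: not_leaf; left.
Qed.

Lemma subdivided_inner_blocks (R : realType) (d : nat) (I J K : finType)
    (TI : cluster_tree R d I) (TJ : cluster_tree R d J) (TK : cluster_tree R d K)
    (eta : R) (t : TI) (r : TK) (s : TJ) :
  subdivided eta t r s -> inner_block eta t s /\ inner_block eta s r.
Proof. by case. Qed.

Theorem lemma3p1 (R : realType) (d : nat) (I J K : finType)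
  (TI : cluster_tree R d I) (TJ : cluster_tree R d J)
  (TK : cluster_tree R d K)
  (hTI : is_cluster_tree TI) (hTJ : is_cluster_tree TJ)
  (hTK : is_cluster_tree TK)
  (eta : R) (heta : 0 < eta) (t : TI) (r : TK) :
  (exists s : TJ, subdivided eta t r s) ->
  exists s : TJ,
    inner_block eta t s /\ inner_block eta s r /\
    eta / (eta + 1) * dist (ct_dom t) (ct_dom r)
      < Num.max (diam (ct_dom t)) (Num.max (diam (ct_dom s)) (diam (ct_dom r))).
Proof.
move=> [s /subdivided_inner_blocks [ts sr]]; exists s; do !split => //.
apply: scaled_dist_lt_max heta (inner_block_dist_lt ts) (inner_block_dist_lt sr) _.
exact: dist_triangle_diam (cluster_dom_nonempty hTI t) (cluster_dom_nonempty hTJ s)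
  (cluster_dom_nonempty hTK r) (cluster_dom_bounded hTJ s).
Qed.
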